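(* Let $S$ be a semigroup, $I, J$ sets and $P$ a $J \times I$ matrix with entries in $S$, and suppose the Rees matrix semigroup $M = M(S; I, J; P)$ is finitely generated. Let $\sigma : X^+ \to S$ and $\tau : Y^+ \to M$ be finite choices of generators. Then there is a rational transduction $\Phi$ from $\hat{X}^*$ to $\hat{Y}^*$ such that $L_\tau(M)$ is the Kleene closure of the image of $L_\sigma(S)$ under $\Phi$.
   Context: The Rees matrix semigroup $M(S; I, J; P)$ (with $P$ having all entries in $S$) has elements $I \times S \times J$ and product $(i_1, g_1, j_1)(i_2, g_2, j_2) = (i_1, g_1 P_{j_1 i_2} g_2, j_2)$. For a semigroup $S$, $S^1$ denotes the monoid obtained by adjoining a new identity $1$ (even if $S$ already has one). A choice of generators for $S$ is a surjective morphism $\sigma : X^+ \to S$ from a free semigroup, finite if $X$ is finite; it extends uniquely to $\sigma^1 : X^* \to S^1$. Let $\overline{X} = \{\overline{x} : x \in X\}$ be a set of formal inverses, $\hat{X} = X \cup \overline{X}$. The loop automaton of $S$ with respect to $\sigma$ is the directed labelled graph with vertex set $S^1$, having for each $a \in S^1$ and $x \in X$ an edge from $a$ to $a(x\sigma)$ labelled $x$ and an edge from $a(x\sigma)$ to $a$ labelled $\overline{x}$. The loop problem $L_\sigma(S) \subseteq \hat{X}^*$ is the set of words labelling paths from $1$ to $1$ in this graph (including the empty word). A rational transduction is a relation between free monoids realised by a finite-state transducer. *)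

From mathcomp Require Import all_boot.
From Stdlib Require List.
Set Implicit Arguments. Unset Strict Implicit. Unset Printing Implicit Defensive.

Definition assoc_op (S : Type) (mul : S -> S -> S) : Prop :=
  forall a b c, mul a (mul b c) = mul (mul a b) c.

Definition rees_mul (S I J : Type) (mul : S -> S -> S) (P : J -> I -> S)
  (a b : I * S * J) : I * S * J :=
  let '(i1, g1, j1) := a in
  let '(i2, g2, j2) := b in
  (i1, mul (mul g1 (P j1 i2)) g2, j2).

(* Free semigroup X^+ = nonempty words over X.  A morphism X^+ -> S is
   determined by its values on letters gen : X -> S; [eval_word] is that
   morphism applied to the nonempty word x :: w. *)
Definition eval_word (X S : Type) (mul : S -> S -> S) (gen : X -> S)
  (x : X) (w : seq X) : S :=
  foldl (fun acc y => mul acc (gen y)) (gen x) w.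

Definition is_choice_of_generators (X S : Type) (mul : S -> S -> S)
  (gen : X -> S) : Prop :=
  forall s : S, exists (x : X) (w : seq X), eval_word mul gen x w = s.

Definition finitely_generated (S : Type) (mul : S -> S -> S) : Prop :=
  exists (Z : finType) (gen : Z -> S), is_choice_of_generators mul gen.

(* S^1 = option S, None being the adjoined identity; right action of S. *)
Definition mul1 (S : Type) (mul : S -> S -> S) (a : option S) (s : S) : S :=
  match a with None => s | Some a' => mul a' s end.

(* hat X = X + X: inl x is x, inr x is the formal inverse xbar.
   lpath a w b : w labels a path from a to b in the loop automaton. *)
Fixpoint lpath (X S : Type) (mul : S -> S -> S) (gen : X -> S)
  (a : option S) (w : seq (X + X)) (b : option S) : Prop :=
  match w with
  | [::] => a = b
  | inl x :: w' => lpath mul gen (Some (mul1 mul a (gen x))) w' b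
  | inr x :: w' => exists c : option S,
      Some (mul1 mul c (gen x)) = a /\ lpath mul gen c w' b
  end.

Definition loop_problem (X S : Type) (mul : S -> S -> S) (gen : X -> S)
  (w : seq (X + X)) : Prop :=
  lpath mul gen None w None.

Inductive transducer_accepts (A B : Type) (Q : finType)
  (final : pred Q) (delta : seq (Q * seq A * seq B * Q))
  : Q -> seq A -> seq B -> Prop :=
  | ta_final q : final q -> transducer_accepts final delta q [::] [::]
  | ta_step q a b q' u v :
      List.In (q, a, b, q') delta ->
      transducer_accepts final delta q' u v ->
      transducer_accepts final delta q (a ++ u) (b ++ v).

Definition rational_transduction (A B : Type)
  (Phi : seq A -> seq B -> Prop) : Prop :=
  exists (Q : finType) (q0 : Q) (final : pred Q)
         (delta : seq (Q * seq A * seq B * Q)),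
    forall u v, Phi u v <-> transducer_accepts final delta q0 u v.

Definition image_lang (A B : Type) (Phi : seq A -> seq B -> Prop)
  (L : seq A -> Prop) (v : seq B) : Prop :=
  exists u, L u /\ Phi u v.

Inductive kleene_star (B : Type) (L : seq B -> Prop) : seq B -> Prop :=
  | ks_nil : kleene_star L [::]
  | ks_cat u v : L u -> kleene_star L v -> kleene_star L (u ++ v).

From mathcomp Require Import all_boot.
From Stdlib Require Import ClassicalEpsilon.
Set Implicit Arguments. Unset Strict Implicit. Unset Printing Implicit Defensive.

(* A loop at 1 in the loop automaton of M = M(S; I, J; P) is a product of
   simple loops, which leave 1 by a letter y and come back to 1 only at their
   end, by a letter ybar.  Along a simple loop the current element (i, g, j)
   keeps its I-coordinate, and g follows a loop at 1 in the loop automaton of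
   S: reading y multiplies g on the right by P_{j, i_y} g_y and reading ybar
   cancels such a factor, and a transducer spells both over X.  As tau has
   finitely many letters, i and j range over finite sets and can be kept in
   the state of the transducer. *)

Section KleeneStar.

Variables (B : Type) (K L : seq B -> Prop).

Lemma kleene_star_sub :
  L [::] -> (forall u w, L u -> L w -> L (u ++ w)) -> (forall u, K u -> L u) ->
  forall w, kleene_star K w -> L w.
Proof. by move=> L0 Lcat KL w; elim=> // u {}w Ku _; apply: Lcat; apply: KL. Qed.

Lemma sub_kleene_star :
  (forall w, L w -> w <> [::] ->
     exists u w', [/\ w = u ++ w', u <> [::], K u & L w']) ->
  forall w, L w -> kleene_star K w.
Proof.
move=> Lsplit w; have [n] := ubnP (size w); elim: n w => // n IHn w /ltnSE le_wn Lw.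
case: w Lw le_wn => [|b w] Lw le_wn; first exact: ks_nil.
have [u [w' [def_w u_nil Ku Lw']]] := Lsplit _ Lw (fun e => List.nil_cons (esym e)).
have lt_w'n : size w' < n.
  apply: leq_trans le_wn; rewrite def_w size_cat.
  by case: u u_nil {Ku def_w} => [//|x u _]; rewrite /= addSn ltnS leq_addl.
by rewrite def_w; apply: ks_cat Ku (IHn _ lt_w'n Lw').
Qed.

End KleeneStar.

Section ClassRepresentative.

Variables (A B : Type) (h : A -> B).

Definition class_rep (a : A) : A := epsilon (inhabits a) (fun a' => h a' = h a).

Lemma class_repE a : h (class_rep a) = h a.
Proof. exact: (epsilon_spec _ (fun a' => h a' = h a) (ex_intro _ a erefl)). Qed.

Lemma class_rep_eq a b : h a = h b -> class_rep a = class_rep b.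
Proof. by rewrite /class_rep => ->; apply: epsilon_inh_irrelevance; exists b. Qed.

End ClassRepresentative.

Lemma in_map_enum (T : finType) (U : Type) (f : T -> U) (t : T) :
  List.In (f t) (map f (enum T)).
Proof.
apply/List.in_map; have : t \in enum T by rewrite mem_enum.
by elim: (enum T) => //= t' s IHs; rewrite in_cons => /predU1P[->|/IHs]; [left|right].
Qed.

Section LoopAutomaton.

Variables (X S : Type) (mul : S -> S -> S) (gen : X -> S).
Hypothesis mulA : assoc_op mul.

Local Notation lpath := (lpath mul gen).

Lemma mul1A c s t : mul1 mul (Some (mul1 mul c s)) t = mul1 mul c (mul s t).
Proof. by case: c => //= c; rewrite mulA. Qed.

Lemma eval_word_cons x y w :
  eval_word mul gen x (y :: w) = mul (gen x) (eval_word mul gen y w).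
Proof.
rewrite /eval_word /=; elim: w (gen y) => //= z w IHw s.
by rewrite -IHw mulA.
Qed.

Lemma lpath_cat a w1 w2 b :
  lpath a (w1 ++ w2) b <-> exists c, lpath a w1 c /\ lpath c w2 b.
Proof.
elim: w1 a => [|[x|x] w1 IHw1] a /=.
- by split=> [? | [c [-> ?]]]; first exists a.
- exact: IHw1.
- split=> [[c [<- /IHw1[d [? ?]]]] | [d [[c [<- ?]] ?]]].
    by exists d; split=> //; exists c.
  by exists c; split=> //; apply/IHw1; exists d.
Qed.

Lemma lpath_letters c x w b :
  lpath c (map inl (x :: w)) b <-> b = Some (mul1 mul c (eval_word mul gen x w)).
Proof.
elim: w x c => [|y w IHw] x c; first by split=> ->.
by rewrite eval_word_cons -mul1A; apply: IHw.
Qed.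

Lemma lpath_rev_inverses a w b :
  lpath a (rev (map inr w)) b <-> lpath b (map inl w) a.
Proof.
elim: w a b => [|x w IHw] a b /=; first by split=> ->.
rewrite rev_cons -cats1 lpath_cat /=.
split=> [[c [/IHw lp [d [def_c <-]]]] | ?]; first by rewrite -def_c in lp.
by exists (Some (mul1 mul b (gen x))); split; [apply/IHw | exists b].
Qed.

Lemma loop_problem_cat u w :
  loop_problem mul gen u -> loop_problem mul gen w -> loop_problem mul gen (u ++ w).
Proof. by move=> Lu Lw; apply/lpath_cat; exists None. Qed.

Lemma lpath_inverse_letter x a b :
  lpath a [:: inr x; inl x] b <-> a = b /\ exists c, a = Some (mul1 mul c (gen x)).
Proof.
split=> [[c [<- <-]] | [<- [c ->]]]; first by split=> //; exists c.
by exists c.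
Qed.

Hypothesis gen_onto : is_choice_of_generators mul gen.

Lemma last_generator s : exists c x, s = mul1 mul c (gen x).
Proof.
have [x [w <-]] := gen_onto s; case/lastP: w => [|w y]; first by exists None, x.
by exists (Some (eval_word mul gen x w)), y; rewrite /eval_word foldl_rcons.
Qed.

Lemma spelling_exists s :
  exists w : seq X, forall c b, lpath c (map inl w) b <-> b = Some (mul1 mul c s).
Proof. by have [x [w <-]] := gen_onto s; exists (x :: w) => c b; apply: lpath_letters. Qed.

Definition spelling (s : S) : seq X :=
  proj1_sig (constructive_indefinite_description _ (spelling_exists s)).

Definition spell_fwd (s : S) : seq (X + X) := map inl (spelling s).

Definition spell_bwd (s : S) : seq (X + X) := rev (map inr (spelling s)).

Lemma lpath_spell_fwd c s b :
  lpath c (spell_fwd s) b <-> b = Some (mul1 mul c s).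
Proof. by rewrite /spell_fwd /spelling; case: constructive_indefinite_description. Qed.

Lemma lpath_spell_bwd a s b :
  lpath a (spell_bwd s) b <-> a = Some (mul1 mul b s).
Proof. by rewrite /spell_bwd lpath_rev_inverses lpath_spell_fwd. Qed.

End LoopAutomaton.

Section ReesLoops.

Variables (S : Type) (mul : S -> S -> S).
Hypothesis mulA : assoc_op mul.
Variables (I J : Type) (P : J -> I -> S).
Variables (X : finType) (sigma : X -> S).
Hypothesis sigma_onto : is_choice_of_generators mul sigma.
Variables (Y : finType) (tau : Y -> I * S * J).

Local Notation rmul := (rees_mul mul P).
Local Notation iY y := (tau y).1.1.
Local Notation gY y := (tau y).1.2.
Local Notation jY y := (tau y).2.
Local Notation fwd := (spell_fwd mulA sigma_onto).
Local Notation bwd := (spell_bwd mulA sigma_onto).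

Lemma tauE y : tau y = (iY y, gY y, jY y).
Proof. by case: (tau y) => [[]]. Qed.

Definition ri : Y -> Y := class_rep (fun y => iY y).
Definition rj : Y -> Y := class_rep (fun y => jY y).

Lemma iY_ri y : iY (ri y) = iY y. Proof. exact: (class_repE (fun y => iY y)). Qed.
Lemma jY_rj y : jY (rj y) = jY y. Proof. exact: (class_repE (fun y => jY y)). Qed.

Lemma ri_eq y z : iY y = iY z -> ri y = ri z.
Proof. exact: (@class_rep_eq _ _ (fun y => iY y) y z). Qed.

Lemma rj_eq y z : jY y = jY z -> rj y = rj z.
Proof. exact: (@class_rep_eq _ _ (fun y => jY y) y z). Qed.

(* [Some (Some (a, r))] stands for the elements (iY a, g, jY r) of M, with g
   the current state of the loop automaton of S; a and r are taken among the
   representatives [ri], [rj] so that the state depends only on (i, j).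
   [None] is the initial and [Some None] the final state. *)
Local Notation state := (option (option (Y * Y))).
Local Notation start := (None : state).
Local Notation stop := (Some None : state).
Local Notation mid a r := (Some (Some (a, r)) : state).

Definition rees_label : finType := (Y + Y * Y * Y + Y * Y * Y * X + Y)%type.

(* The letter ybar from (iY a, h P_{jY r, iY y} g_y, jY y) back to
   (iY a, h, jY r) is matched by spelling P_{jY r, iY y} g_y backwards and
   then reading xbar x, which checks that h is an element of S rather than
   the adjoined identity. *)
Definition rees_edge (l : rees_label) : state * seq (X + X) * seq (Y + Y) * state :=
  match l with
  | inl (inl (inl y)) => (start, fwd (gY y), [:: inl y], mid (ri y) (rj y))
  | inl (inl (inr (a, r, y))) =>
      (mid a r, fwd (mul (P (jY r) (iY y)) (gY y)), [:: inl y], mid a (rj y))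
  | inl (inr (a, r, y, x)) =>
      (mid a (rj y), bwd (mul (P (jY r) (iY y)) (gY y)) ++ [:: inr x; inl x],
       [:: inr y], mid a (rj r))
  | inr y => (mid (ri y) (rj y), bwd (gY y), [:: inr y], stop)
  end.

Definition rees_delta := map rees_edge (enum rees_label).

Definition rees_final (q : state) : bool := q == stop.

Local Notation accepts := (transducer_accepts rees_final rees_delta).

Definition rees_transduction (u : seq (X + X)) (v : seq (Y + Y)) : Prop :=
  accepts start u v.

Lemma rees_transduction_rational : rational_transduction rees_transduction.
Proof. by exists _, start, rees_final, rees_delta. Qed.

Lemma accepts_edge l u v :
  accepts (rees_edge l).2 u v ->
  accepts (rees_edge l).1.1.1 ((rees_edge l).1.1.2 ++ u) ((rees_edge l).1.2 ++ v).
Proof. by apply: ta_step; case: (rees_edge l) (in_map_enum rees_edge l) => [[[]]]. Qed.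

Definition accepted_from (q : state) (u : seq (X + X)) (v : seq (Y + Y)) : Prop :=
  match q with
  | None => loop_problem mul sigma u -> loop_problem rmul tau v
  | Some None => u = [::] /\ v = [::]
  | Some (Some (a, r)) => forall g,
      lpath mul sigma (Some g) u None -> lpath rmul tau (Some (iY a, g, jY r)) v None
  end.

Lemma accepts_sound q u v : accepts q u v -> accepted_from q u v.
Proof.
elim=> {q u v} [q /eqP -> // | q s t q' u v /List.in_map_iff[l [def_e _]] _].
case: l def_e => [[[y | [[a r] y]] | [[[a r] y] x]] | y] /= [<- <- <- <-] /= IH.
- move=> /lpath_cat[c [/lpath_spell_fwd -> /IH]].
  by rewrite iY_ri jY_rj -tauE.
- move=> g /lpath_cat[c [/lpath_spell_fwd -> /IH]].
  by rewrite jY_rj [tau y]tauE /= mulA.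
- move=> g /lpath_cat[c [/lpath_cat[b [/lpath_spell_bwd def_g]]]].
  move=> /lpath_inverse_letter[def_c [d def_h]]; rewrite -{}def_c {}def_h in def_g *.
  move=> /IH; rewrite jY_rj => Lv.
  exists (Some (iY a, mul1 mul d (sigma x), jY r)); split=> //.
  by case: def_g => ->; rewrite [tau y]tauE /= jY_rj mulA.
- case: IH => -> -> g; rewrite cats0 => /lpath_spell_bwd[->].
  by exists None; rewrite iY_ri jY_rj -tauE.
Qed.

Lemma image_loops_sound v :
  image_lang rees_transduction (loop_problem mul sigma) v -> loop_problem rmul tau v.
Proof. by case=> u [Lu /accepts_sound]; apply. Qed.

Hypothesis tau_onto : is_choice_of_generators rmul tau.

Lemma rees_mul1_j d y : (mul1 rmul d (tau y)).2 = jY y.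
Proof. by case: d => [[[i g] j]|] //=; rewrite [tau y]tauE. Qed.

Lemma split_first_return v a r g :
  lpath rmul tau (Some (iY a, g, jY r)) v None ->
  exists v1 v2 u, [/\ v = v1 ++ v2, lpath mul sigma (Some g) u None,
                      accepts (mid (ri a) (rj r)) u v1 & loop_problem rmul tau v2].
Proof.
elim: v a r g => [|[y|y] v IHv] a r g //=.
- rewrite [tau y]tauE /= => /IHv[v1 [v2 [u [-> Lu acc Lv2]]]].
  exists (inl y :: v1), v2, (fwd (mul (P (jY r) (iY y)) (gY y)) ++ u); split=> //.
    by apply/lpath_cat; exists (Some (mul g (mul (P (jY r) (iY y)) (gY y))));
       split; [apply/lpath_spell_fwd | rewrite /= mulA].
  by have := accepts_edge (l := inl (inl (inr (ri a, rj r, y)))) acc; rewrite /= jY_rj.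
case=> [[[[i h] j]|] [def_m Lv]]; rewrite [tau y]tauE /= in def_m; last first.
  case: def_m => def_i def_g def_j; exists [:: inr y], v, (bwd (gY y)).
  split=> //; first by apply/lpath_spell_bwd; rewrite def_g.
  have := accepts_edge (l := inr y) (ta_final _ (isT : rees_final stop)).
  by rewrite /= cats0 (ri_eq def_i) (rj_eq def_j).
case: def_m => def_i def_g def_j; rewrite def_i in Lv.
have [d [z def_m]] := last_generator tau_onto (iY a, h, j).
have jY_z : jY z = j by rewrite -(rees_mul1_j d) -def_m.
rewrite -jY_z in Lv; have [v1 [v2 [u [-> Lu acc Lv2]]]] := IHv _ _ _ Lv.
have [d' [x def_h]] := last_generator sigma_onto h.
exists (inr y :: v1), v2, (bwd (mul (P j (iY y)) (gY y)) ++ [:: inr x; inl x] ++ u).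
split=> //.
  apply/lpath_cat; exists (Some h); split.
    by apply/lpath_spell_bwd; rewrite -def_g /= mulA.
  apply/lpath_cat; exists (Some h); split=> //.
  by apply/lpath_inverse_letter; split=> //; exists d'; rewrite -def_h.
have := accepts_edge (l := inl (inr (ri a, z, y, x))) acc.
by rewrite /= -catA jY_z (rj_eq def_j).
Qed.

Lemma loop_first_return w :
  loop_problem rmul tau w -> w <> [::] ->
  exists u w', [/\ w = u ++ w', u <> [::],
                   image_lang rees_transduction (loop_problem mul sigma) u
                 & loop_problem rmul tau w'].
Proof.
rewrite /loop_problem; case: w => [//|[y|y] v] /=; last by case=> c [].
rewrite [tau y]tauE => /split_first_return[v1 [v2 [u [-> Lu acc Lv2]]]] _.
exists (inl y :: v1), v2; split=> //; exists (fwd (gY y) ++ u); split.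
  by apply/lpath_cat; exists (Some (gY y)); split=> //; apply/lpath_spell_fwd.
exact: (accepts_edge (l := inl (inl (inl y))) acc).
Qed.

End ReesLoops.

Theorem theorem4p1 (S : Type) (mul : S -> S -> S) (mul_assoc : assoc_op mul)
  (I J : Type) (P : J -> I -> S)
  (Mfg : finitely_generated (rees_mul mul P))
  (X : finType) (sigma : X -> S) (Hsigma : is_choice_of_generators mul sigma)
  (Y : finType) (tau : Y -> I * S * J)
  (Htau : is_choice_of_generators (rees_mul mul P) tau) :
  exists Phi : seq (X + X) -> seq (Y + Y) -> Prop,
    rational_transduction Phi /\
    forall v : seq (Y + Y),
      loop_problem (rees_mul mul P) tau v <->
      kleene_star (image_lang Phi (loop_problem mul sigma)) v.
Proof.
exists (rees_transduction mul_assoc P Hsigma tau).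
split; first exact: rees_transduction_rational.
move=> v; split; first by apply: sub_kleene_star; apply: loop_first_return.
apply: kleene_star_sub => //; first exact: loop_problem_cat.
exact: image_loops_sound.
Qed.
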